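(* Let $X$ be a connected graph (a finite 1-dimensional CW complex). Then there is a canonical isomorphism $$\det(\mathbb R V(X))\otimes \bigotimes_{e\in E(X)} \det(\mathbb R H(e)) \cong\det(H_1(X;\mathbb R))\otimes \det(\mathbb R E(X)).$$
   Context: For a finite-dimensional real vector space $W$ of dimension $n$, $\det(W)=\wedge^n W$. For a finite set $Z$, $\mathbb R Z$ is the real vector space with basis $Z$. For a graph $X$, $V(X)$ is its set of vertices, $E(X)$ its set of edges, and for an edge $e$, $H(e)$ is the set of the two half-edges of $e$. *)

(* Real vector spaces are modelled as subspaces of the
   coordinate spaces  R^T = {ffun T -> R^o}  (T a finite type), over an
   arbitrary real field R (the reals being a particular instance). *)
From HB Require Import structures.
From mathcomp Require Import all_boot all_order all_algebra.
From mathcomp Require Import fingroup perm.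
Set Implicit Arguments. Unset Strict Implicit. Unset Printing Implicit Defensive.
Import Order.TTheory GRing.Theory Num.Theory.
Local Open Scope ring_scope.

(* vertices, edges, half-edges; every half-edge has an end vertex and
   belongs to an edge; each edge e has exactly two half-edges H(e).
   Loops and multiple edges are allowed. *)
Record graph := Graph {
  gV : finType; gE : finType; gH : finType;
  gend : gH -> gV;
  gedge : gH -> gE;
  gedgeP : forall e, #|[set h | gedge h == e]| = 2 }.

Definition adj (G : graph) : rel (gV G) := fun u w =>
  [exists h, exists h', [&& gedge h == gedge h', gend h == u & gend h' == w]].

Definition connected (G : graph) : Prop :=
  (0 < #|gV G|)%N /\ forall u w, connect (@adj G) u w.

Definition is_aut (G : graph) (sV : {perm gV G}) (sE : {perm gE G})
  (sH : {perm gH G}) : Prop :=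
  (forall h, gend (sH h) = sV (gend h)) /\ (forall h, gedge (sH h) = sE (gedge h)).

Definition fsp (R : fieldType) (T : finType) := {ffun T -> R^o}.

(* u_1 /\ ... /\ u_k  in  /\^k R^Z, viewed (canonically, via the basis Z)
   as the alternating function  (a_1..a_k) |-> det [u_i(a_j)]  on Z^k. *)
Definition wedge (R : fieldType) (Z : finType) (k : nat)
  (u : k.-tuple (fsp R Z)) : fsp R (k.-tuple Z) :=
  [ffun a : k.-tuple Z => \det (\matrix_(i < k, j < k) (tnth u i) (tnth a j))].

(* det(U) = /\^k U for k = dim U, the line in /\^k R^Z spanned by the
   wedge of a basis of U. *)
Definition detl (R : fieldType) (Z : finType) (k : nat)
  (U : {vspace fsp R Z}) : {vspace fsp R (k.-tuple Z)} :=
  <[wedge [tuple (vbasis U)`_i | i < k]]>%VS.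

Definition tens (R : fieldType) (A B : finType) (L1 : {vspace fsp R A})
  (L2 : {vspace fsp R B}) : {vspace fsp R (A * B)%type} :=
  <<[seq [ffun p : (A * B)%type => f p.1 * g p.2] | f : fsp R A <- vbasis L1, g : fsp R B <- vbasis L2]>>%VS.

(* tensor product over i in I of subspaces L i <= R^Y, inside R^(Y^I) *)
Definition bigtens (R : fieldType) (I Y : finType) (L : I -> {vspace fsp R Y})
  : {vspace fsp R {ffun I -> Y}} :=
  <<[seq [ffun t : {ffun I -> Y} => \prod_i ((vbasis (L i))`_(c i) : fsp R Y) (t i)]
     | c : {ffun I -> 'I_#|Y| } ]>>%VS.

Definition RHe (R : fieldType) (G : graph) (e : gE G) : {vspace fsp R (gH G)} :=
  <<[seq [ffun x : gH G => ((x == h)%:R : R^o)] | h <- enum [pred h | gedge h == e]]>>%VS.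

(* cellular 1-chains: c : H -> R with c(h) + c(h') = 0 for the two
   half-edges of each edge; boundary  v |-> sum of c over half-edges at v
   (this is minus the usual boundary; the kernel is the same). *)
Definition antisym (R : fieldType) (G : graph) (c : fsp R (gH G)) : fsp R (gH G) :=
  [ffun h => \sum_(h' | gedge h' == gedge h) c h'].
Definition bd (R : fieldType) (G : graph) (c : fsp R (gH G)) : fsp R (gV G) :=
  [ffun v => \sum_(h | gend h == v) c h].

(* H_1(X;R) = cycles (no 2-cells) *)
Definition H1 (R : fieldType) (G : graph) : {vspace fsp R (gH G)} :=
  (lker (linfun (@antisym R G)) :&: lker (linfun (@bd R G)))%VS.

Definition LT (G : graph) : finType :=
  (#|gV G|.-tuple (gV G) * {ffun gE G -> 2.-tuple (gH G)})%type.
Definition RT (R : fieldType) (G : graph) : finType :=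
  ((\dim (H1 R G)).-tuple (gH G) * #|gE G|.-tuple (gE G))%type.

Definition lhsL (R : fieldType) (G : graph) : {vspace fsp R (LT G)} :=
  tens (detl #|gV G| (fullv : {vspace fsp R (gV G)}))
       (bigtens (fun e => detl 2 (RHe R e))).

Definition rhsL (R : fieldType) (G : graph) : {vspace fsp R (RT R G)} :=
  tens (detl (\dim (H1 R G)) (H1 R G)) (detl #|gE G| (fullv : {vspace fsp R (gE G)})).

Definition pullL (R : fieldType) (G : graph) (sV : {perm gV G}) (sE : {perm gE G})
  (sH : {perm gH G}) (f : fsp R (LT G)) : fsp R (LT G) :=
  [ffun x : LT G => f (map_tuple sV x.1, [ffun e => map_tuple sH (x.2 ((sE^-1)%g e))])].

Definition pullR (R : fieldType) (G : graph) (sE : {perm gE G})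
  (sH : {perm gH G}) (f : fsp R (RT R G)) : fsp R (RT R G) :=
  [ffun x : RT R G => f (map_tuple sH x.1, map_tuple sE x.2)].

(* Both sides are lines in coordinate spaces.  With an arbitrary orientation
   (h1 e, h2 e) of every edge, the left one is spanned by
   wedge(std basis of R V) (x) (x)_e (h1 e /\ h2 e) and the right one by
   wedge(basis of H_1) (x) wedge(std basis of R E); Phi maps the first generator
   to the second.  An automorphism s multiplies the first generator by
   det(s | R V) * prod_e eps_e, where eps_e = +-1 says whether s preserves the
   orientation of e, and the second by det(s | H_1) * det(s | R E).  These scalars
   agree: the sequence 0 -> H_1 -> C_1 -> R V -> R -> 0 is exact (at R V because X
   is connected) and determinants are multiplicative along it, so
   det(s | C_1) = det(s | H_1) * det(s | R V); in the basis (h1 e - h2 e)_e of C_1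
   the automorphism acts by a signed permutation matrix, so
   det(s | C_1) = prod_e eps_e * det(s | R E); and determinants of permutation
   matrices square to 1. *)

From HB Require Import structures.
From mathcomp Require Import all_boot all_order all_algebra.
From mathcomp Require Import fingroup perm.
Set Implicit Arguments. Unset Strict Implicit. Unset Printing Implicit Defensive.
Import Order.TTheory GRing.Theory Num.Theory.
Local Open Scope ring_scope.

Lemma det_mx2 (R : comNzRingType) (A : 'M[R]_2) : \det A = A 0 0 * A 1 1 - A 0 1 * A 1 0.
Proof.
rewrite (expand_det_row _ 0) !big_ord_recl big_ord0 addr0 /cofactor !det_mx11 !mxE /=.
rewrite expr0 mul1r expr1 mulN1r mulrN.
by congr (_ * _ - _ * _); congr (A _ _); apply/val_inj.
Qed.

Section SubspaceDeterminant.
Variables (K : fieldType) (vT : vectType K).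

Definition is_mx_of d (b : d.-tuple vT) (f : vT -> vT) (M : 'M[K]_d) :=
  forall i : 'I_d, f b`_i = \sum_j M i j *: b`_j.

(* The determinant of [f] on [U]; meaningful only when [U] is [f]-stable. *)
Definition ldet (f : 'End(vT)) (U : {vspace vT}) : K :=
  \det (\matrix_(i < \dim U, j < \dim U) coord (vbasis U) j (f (vbasis U)`_i)).

Lemma nth_basis_mem d (b : d.-tuple vT) U (i : 'I_d) : basis_of U b -> b`_i \in U.
Proof. by move/basis_mem; apply; rewrite mem_nth ?size_tuple. Qed.

Lemma coord_is_mx_of d (b : d.-tuple vT) U (f : vT -> vT) :
  basis_of U b -> (forall i : 'I_d, f b`_i \in U) ->
  is_mx_of b f (\matrix_(i, j) coord b j (f b`_i)).
Proof.
by move=> hb fU i; rewrite (coord_basis hb (fU i)); apply: eq_bigr => j _; rewrite mxE.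
Qed.

Lemma sum_scale_mulmx d (A B : 'M[K]_d) (b : d.-tuple vT) i :
  \sum_j A i j *: (\sum_k B j k *: b`_k) = \sum_k (A *m B) i k *: b`_k.
Proof.
under eq_bigr do rewrite scaler_sumr.
rewrite exchange_big /=; apply: eq_bigr => k _.
by rewrite mxE scaler_suml; apply: eq_bigr => j _; rewrite scalerA.
Qed.

Lemma free_sum_scale_inj d (b : d.-tuple vT) (A B : 'M[K]_d) :
  free b -> (forall i, \sum_j A i j *: b`_j = \sum_j B i j *: b`_j) -> A = B.
Proof.
by move=> fb eAB; apply/matrixP => i j; have := congr1 (coord b j) (eAB i); rewrite !coord_sum_free.
Qed.

Lemma basis_change_mx d (b b' : d.-tuple vT) U :
  basis_of U b -> basis_of U b' ->
  exists2 C : 'M[K]_d, \det C != 0 & forall i : 'I_d, b'`_i = \sum_j C i j *: b`_j.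
Proof.
move=> hb hb'.
pose C := \matrix_(i < d, j < d) coord b j b'`_i.
pose D := \matrix_(i < d, j < d) coord b' j b`_i.
have eC (i : 'I_d) : b'`_i = \sum_j C i j *: b`_j.
  by rewrite (coord_basis hb (nth_basis_mem i hb')); apply: eq_bigr => j _; rewrite mxE.
have eD (i : 'I_d) : b`_i = \sum_j D i j *: b'`_j.
  by rewrite (coord_basis hb' (nth_basis_mem i hb)); apply: eq_bigr => j _; rewrite mxE.
have CD : C *m D = 1%:M.
  apply: (free_sum_scale_inj (basis_free hb')) => i.
  rewrite -sum_scale_mulmx -(eq_bigr _ (fun j _ => congr1 _ (eD j))) -eC.
  rewrite (bigD1 i) //= big1 => [|j /negPf ji]; last by rewrite mxE eq_sym ji scale0r.
  by rewrite mxE eqxx scale1r addr0.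
by exists C => //; rewrite -unitfE -unitmxE; case: (mulmx1_unit CD).
Qed.

Lemma is_mx_of_det_eq d (b b' : d.-tuple vT) U (f : 'End(vT)) (M M' : 'M[K]_d) :
  basis_of U b -> basis_of U b' -> is_mx_of b f M -> is_mx_of b' f M' ->
  \det M = \det M'.
Proof.
move=> hb hb' hM hM'; have [C C0 eC] := basis_change_mx hb hb'.
have CM : C *m M = M' *m C.
  apply: (free_sum_scale_inj (basis_free hb)) => i.
  rewrite -!sum_scale_mulmx -(eq_bigr _ (fun j _ => congr1 _ (hM j))).
  rewrite -(eq_bigr _ (fun j _ => congr1 _ (eC j))) -hM' eC linear_sum.
  by apply: eq_bigr => j _; rewrite linearZ.
by apply: (mulIf C0); rewrite mulrC -!det_mulmx CM.
Qed.

Lemma is_mx_of_stable d (b : d.-tuple vT) U (f : 'End(vT)) M :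
  basis_of U b -> is_mx_of b f M -> {in U, forall x, f x \in U}.
Proof.
move=> hb hM x /(coord_basis hb) ->.
rewrite linear_sum; apply: memv_suml => i _; rewrite linearZ /= (hM i) memvZ //.
by apply: memv_suml => j _; rewrite memvZ // nth_basis_mem.
Qed.

Lemma ldet_is_mx_of d (b : d.-tuple vT) U (f : 'End(vT)) M :
  basis_of U b -> is_mx_of b f M -> ldet f U = \det M.
Proof.
move=> hb hM; have dU := esym (size_basis hb); subst d.
apply: (is_mx_of_det_eq (vbasisP U) hb _ hM).
apply: coord_is_mx_of (vbasisP U) _ => i.
exact: is_mx_of_stable hb hM _ (nth_basis_mem i (vbasisP U)).
Qed.

Lemma ldet_id U : ldet \1 U = 1.
Proof.
rewrite /ldet -(@det1 K (\dim U)); congr determinant; apply/matrixP => i j.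
by rewrite !mxE lfunE /= coord_free // (basis_free (vbasisP U)).
Qed.

Lemma ldet_signed_perm d (b : d.-tuple vT) U (f : 'End(vT)) (c : 'I_d -> K) (p : 'S_d) :
  basis_of U b -> (forall i : 'I_d, f b`_i = c i *: b`_(p i)) ->
  ldet f U = (\prod_i c i) * (-1) ^+ p.
Proof.
move=> hb hf; have -> : \prod_i c i = \det (diag_mx (\row_i c i)).
  by rewrite det_diag; apply: eq_bigr => i _; rewrite mxE.
rewrite -det_perm -det_mulmx.
apply: ldet_is_mx_of hb _ => i; rewrite hf (bigD1 (p i)) //= big1 => [|j ji].
  by rewrite mul_diag_mx !mxE eqxx mulr1 addr0.
by rewrite mul_diag_mx !mxE eq_sym (negPf ji) mulr0 scale0r.
Qed.

End SubspaceDeterminant.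

Section CatTuple.
Variables (K : fieldType) (vT : vectType K) (m n : nat).
Variables (w : m.-tuple vT) (u : n.-tuple vT).

Lemma nth_cat_lshift (i : 'I_m) : (cat_tuple w u)`_(lshift n i) = w`_i.
Proof. by rewrite /= nth_cat size_tuple ltn_ord. Qed.

Lemma nth_cat_rshift (i : 'I_n) : (cat_tuple w u)`_(rshift m i) = u`_i.
Proof. by rewrite /= nth_cat size_tuple ltnNge leq_addr addKn. Qed.

Lemma sum_scale_cat (c : 'I_(m + n) -> K) :
  \sum_j c j *: (cat_tuple w u)`_j =
  \sum_j c (lshift n j) *: w`_j + \sum_j c (rshift m j) *: u`_j.
Proof.
rewrite big_split_ord; congr (_ + _); apply: eq_bigr => j _.
  by rewrite nth_cat_lshift.
by rewrite nth_cat_rshift.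
Qed.

Lemma coord_cat_rshift x (j : 'I_n) :
  free (cat_tuple w u) -> x \in <<w>>%VS -> coord (cat_tuple w u) (rshift m j) x = 0.
Proof.
move=> fwu /coord_span ex.
pose c := row_mx (\row_i coord w i x) (0 : 'rV[K]_n).
have -> : x = \sum_J c 0 J *: (cat_tuple w u)`_J.
  rewrite sum_scale_cat [X in _ + X]big1 => [|i _]; last by rewrite row_mxEr mxE scale0r.
  by rewrite addr0 {1}ex; apply: eq_bigr => i _; rewrite row_mxEl mxE.
by rewrite coord_sum_free // row_mxEr mxE.
Qed.

End CatTuple.

Section ExactSequence.
Variables (K : fieldType) (vT wT : vectType K).
Variables (U : {vspace vT}) (P : 'Hom(vT, wT)) (f : 'End(vT)) (g : 'End(wT)).
Hypothesis fU : {in U, forall x, f x \in U}.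
Hypothesis fP : {in U, forall x, P (f x) = g (P x)}.

Local Notation W := (U :&: lker P)%VS.
Local Notation Uc := (U :\: lker P)%VS.
(* A basis of [U] extending one of [W]: the matrix [M] of [f] in it is block
   lower triangular, with diagonal blocks representing [f] on [W] and [g] on
   [P @: U]. *)
Local Notation b := (cat_tuple (vbasis W) (vbasis Uc)).
Local Notation M :=
  (\matrix_(i < \dim W + \dim Uc, j < \dim W + \dim Uc) coord b j (f b`_i)).

Lemma cap_ker_stable : {in W, forall x, f x \in W}.
Proof.
move=> x; rewrite !memv_cap !memv_ker => /andP[xU /eqP Px0].
by rewrite fU //= fP // Px0 linear0.
Qed.

Lemma basis_cat_cap_ker : basis_of U b.
Proof.
have dir : directv (W + Uc).
  apply/directv_addP; apply/eqP; rewrite -subv0 -(capv_diff U (lker P)) capvC.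
  by apply: capvS => //; apply: capvSr.
rewrite -{1}(addv_diff_cap U (lker P)) addvC.
exact: cat_basis dir (vbasisP W) (vbasisP Uc).
Qed.

Lemma cat_cap_ker_is_mx_of : is_mx_of b f M.
Proof.
apply: coord_is_mx_of basis_cat_cap_ker _ => i.
exact: fU (nth_basis_mem i basis_cat_cap_ker).
Qed.

Lemma ursubmx_cap_ker : ursubmx M = 0.
Proof.
apply/matrixP => i j; rewrite !mxE nth_cat_lshift.
apply: coord_cat_rshift; first exact: basis_free basis_cat_cap_ker.
by rewrite (span_basis (vbasisP W)) cap_ker_stable // nth_basis_mem ?vbasisP.
Qed.

Lemma ulsubmx_cap_ker : is_mx_of (vbasis W) f (ulsubmx M).
Proof.
move=> i; rewrite -(nth_cat_lshift _ (vbasis Uc)) cat_cap_ker_is_mx_of sum_scale_cat.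
rewrite [X in _ + X]big1 ?addr0 => [|j _]; last first.
  by have /matrixP/(_ i j) := ursubmx_cap_ker; rewrite !mxE => ->; rewrite scale0r.
by apply: eq_bigr => j _; rewrite !mxE.
Qed.

Lemma basis_img_diff_ker : basis_of (P @: U) (map_tuple P (vbasis Uc)).
Proof.
rewrite -limg_ker_compl; apply: limg_basis_of (vbasisP _).
exact: capv_diff.
Qed.

Lemma drsubmx_cap_ker : is_mx_of (map_tuple P (vbasis Uc)) g (drsubmx M).
Proof.
move=> i; rewrite /= !(nth_map 0) ?size_tuple // -fP; last first.
  by rewrite -(nth_cat_rshift (vbasis W)) nth_basis_mem ?basis_cat_cap_ker.
rewrite -(nth_cat_rshift (vbasis W)) cat_cap_ker_is_mx_of sum_scale_cat linearD !linear_sum.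
rewrite [X in X + _]big1 ?add0r => [|j _]; last first.
  apply/eqP; rewrite -memv_ker memvZ //.
  by have := nth_basis_mem j (vbasisP W); rewrite memv_cap => /andP[].
by apply: eq_bigr => j _; rewrite linearZ !mxE (nth_map 0) ?size_tuple.
Qed.

Lemma ldet_ker_img : ldet f U = ldet f W * ldet g (P @: U).
Proof.
rewrite (ldet_is_mx_of basis_cat_cap_ker cat_cap_ker_is_mx_of).
rewrite (ldet_is_mx_of (vbasisP W) ulsubmx_cap_ker).
rewrite (ldet_is_mx_of basis_img_diff_ker drsubmx_cap_ker).
by rewrite -{1}(submxK M) ursubmx_cap_ker det_lblock.
Qed.

End ExactSequence.

Section Lines.
Variables (K : fieldType) (vT wT : vectType K).

Lemma vline_scale (c : K) (x : vT) : c != 0 -> <[c *: x]>%VS = <[x]>%VS.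
Proof.
move=> c0; apply/eqP; rewrite eqEsubv -!memvE memvZ ?memv_line //=.
by rewrite -[x in x \in _](scalerK c0) memvZ ?memv_line.
Qed.

Lemma vline0 : <[0 : vT]>%VS = 0%VS.
Proof. by apply/eqP; rewrite -dimv_eq0 dim_vline eqxx. Qed.

Lemma vbasis_vline (x : vT) : exists2 c : K,
  c != 0 & (vbasis <[x]>%VS : seq vT) = if x == 0 then [::] else [:: c *: x].
Proof.
have hb := vbasisP <[x]>%VS.
have sz : size (vbasis <[x]>%VS : seq vT) = (x != 0) by rewrite size_tuple dim_vline.
move: hb sz; case: (vbasis _ : seq vT) => [|y [|z s]] hb //= sz; last by case: (x != 0) sz.
  by exists 1; [exact: oner_neq0 | case: eqP sz].
have /vlineP [c yc] := basis_mem hb (mem_head _ _).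
exists c; last by move: sz; case: eqP => //; rewrite yc.
by apply: contraNneq (basis_not0 hb (mem_head _ _)) => c0; rewrite yc c0 scale0r.
Qed.

Lemma basis_of_vbasis_tuple (U : {vspace vT}) k :
  \dim U = k -> basis_of U [tuple (vbasis U)`_i | i < k].
Proof.
move=> <-; have -> : [tuple (vbasis U)`_i | i < \dim U] = vbasis U.
  by apply: eq_from_tnth => i; rewrite tnth_mktuple (tnth_nth 0).
exact: vbasisP.
Qed.

Lemma vline_commute (a : vT) (b : wT) (Phi : 'Hom(vT, wT))
    (f : {linear vT -> vT}) (g : {linear wT -> wT}) (c : K) :
  Phi a = b -> f a = c *: a -> g b = c *: b ->
  {in <[a]>%VS, forall x, Phi (f x) = g (Phi x)}.
Proof. by move=> ab fa gb _ /vlineP [k ->]; rewrite !linearZ /= fa linearZ /= ab gb. Qed.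

End Lines.

Section Wedge.
Variables (K : fieldType) (Z : finType).

Definition pull (s : Z -> Z) (x : fsp K Z) : fsp K Z := [ffun z => x (s z)].

Lemma pull_is_linear s : linear (pull s).
Proof. by move=> a x y; apply/ffunP => z; rewrite !ffunE. Qed.

HB.instance Definition _ s :=
  GRing.isLinear.Build K (fsp K Z) (fsp K Z) _ (pull s) (pull_is_linear s).

Lemma wedge_mx_comb k (u u' : k.-tuple (fsp K Z)) (C : 'M[K]_k) :
  (forall i : 'I_k, u'`_i = \sum_j C i j *: u`_j) -> wedge u' = \det C *: wedge u.
Proof.
move=> hC; apply/ffunP => a; rewrite !ffunE.
rewrite -[RHS]/(\det C * \det (\matrix_(i, j) tnth u i (tnth a j))) -det_mulmx.
congr determinant.
apply/matrixP => i j; rewrite !mxE (tnth_nth 0) hC sum_ffunE.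
by apply: eq_bigr => l _; rewrite !mxE ffunE (tnth_nth 0).
Qed.

Lemma wedge_map_tuple k (u : k.-tuple (fsp K Z)) s a :
  wedge u (map_tuple s a) = wedge (map_tuple (pull s) u) a.
Proof.
by rewrite !ffunE; congr determinant; apply/matrixP => i j; rewrite !mxE !tnth_map ffunE.
Qed.

Lemma wedge_pull_basis U k (b : k.-tuple (fsp K Z)) s a :
  basis_of U b -> {in U, forall x, pull s x \in U} ->
  wedge b (map_tuple s a) = ldet (linfun (pull s)) U * wedge b a.
Proof.
move=> hb sU.
pose M := \matrix_(i < k, j < k) coord b j (linfun (pull s) b`_i).
have hM : is_mx_of b (linfun (pull s)) M.
  by apply: (coord_is_mx_of hb) => i; rewrite lfunE sU // (nth_basis_mem _ hb).
rewrite (ldet_is_mx_of hb hM) wedge_map_tuple (@wedge_mx_comb _ b _ M) ?ffunE // => i.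
by rewrite (nth_map 0) ?size_tuple // -hM lfunE.
Qed.

Lemma detl_basis U k (b : k.-tuple (fsp K Z)) :
  basis_of U b -> detl k U = <[wedge b]>%VS.
Proof.
move=> hb; have [C C0 eC] := basis_change_mx hb (basis_of_vbasis_tuple (size_basis hb)).
by rewrite /detl (wedge_mx_comb eC) vline_scale.
Qed.

End Wedge.

Section StandardBasis.
Variables (K : fieldType) (A : finType).

Definition dvec (a : A) : fsp K A := [ffun z => (z == a)%:R].

Definition std : #|A|.-tuple (fsp K A) := [tuple dvec (enum_val i) | i < #|A|].

Lemma nth_std (i : 'I_#|A|) : std`_i = dvec (enum_val i).
Proof. exact: nth_mktuple. Qed.

Lemma big_enum_val_ord (R : Type) (idx : R) (op : Monoid.com_law idx) (F : A -> R) :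
  \big[op/idx]_a F a = \big[op/idx]_(i < #|A|) F (enum_val i).
Proof. exact: reindex _ (onW_bij _ (@enum_val_bij A)). Qed.

Lemma sum_natr_eq (P : pred A) (a : A) : \sum_(z | P z) ((z == a)%:R : K) = (P a)%:R.
Proof.
rewrite (big_mkcond P) (bigD1 a) //= big1 => [|z /negPf ->]; last by rewrite if_same.
by rewrite eqxx addr0; case: (P a).
Qed.

Lemma fsp_sum_dvec (x : fsp K A) : x = \sum_a x a *: dvec a.
Proof.
apply/ffunP => z; rewrite sum_ffunE (bigD1 z) //= big1 => [|a /negPf az]; last first.
  by rewrite !ffunE eq_sym az scaler0.
by rewrite !ffunE eqxx -[_ *: _]/(_ * _) mulr1 addr0.
Qed.

Lemma free_dual_points k (u : k.-tuple (fsp K A)) (z : 'I_k -> A) :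
  (forall i j : 'I_k, u`_j (z i) = (i == j)%:R) -> free u.
Proof.
move=> uz; apply/freeP => c hc i; have /ffunP/(_ (z i)) := hc; rewrite sum_ffunE ffunE.
rewrite (bigD1 i) //= big1 => [|j /negPf ji]; last by rewrite ffunE uz eq_sym ji scaler0.
by rewrite ffunE uz eqxx -[_ *: _]/(_ * _) mulr1 addr0.
Qed.

Lemma std_basis : basis_of fullv std.
Proof.
apply/andP; split.
  rewrite eqEsubv subvf; apply/subvP => x _; rewrite (fsp_sum_dvec x) big_enum_val_ord.
  apply: memv_suml => i _; apply/memvZ/memv_span.
  by rewrite -nth_std mem_nth ?size_tuple.
apply: (free_dual_points (z := enum_val)) => i j.
by rewrite nth_std ffunE (inj_eq enum_val_inj).
Qed.

Lemma wedge_std_enum : wedge std [tuple enum_val j | j < #|A|] = 1.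
Proof.
rewrite ffunE -(@det1 K #|A|); congr determinant; apply/matrixP => i j.
by rewrite !mxE !tnth_mktuple !ffunE (inj_eq enum_val_inj) eq_sym.
Qed.

Lemma pull_dvec (s : {perm A}) a : pull s (dvec a) = dvec ((s^-1)%g a).
Proof. by apply/ffunP => z; rewrite !ffunE -[in RHS](inj_eq (@perm_inj _ s)) permKV. Qed.

Definition enum_perm (s : {perm A}) : 'S_#|A| :=
  perm (inj_comp (@enum_rank_inj A) (inj_comp (@perm_inj _ s) (@enum_val_inj _ A))).

Lemma enum_permE s i : enum_val (enum_perm s i) = s (enum_val i).
Proof. by rewrite permE /= enum_rankK. Qed.

Lemma ldet_pull (s : {perm A}) :
  ldet (linfun (pull s)) fullv = (-1) ^+ enum_perm s^-1 :> K.
Proof.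
rewrite (ldet_signed_perm (c := fun=> 1) (p := enum_perm s^-1) std_basis) => [|i].
  by rewrite big1 ?mul1r.
by rewrite lfunE /= !nth_std scale1r pull_dvec enum_permE.
Qed.

End StandardBasis.

Section Tensor.
Variable K : fieldType.

Definition tensor (A B : finType) (f : fsp K A) (g : fsp K B) : fsp K (A * B)%type :=
  [ffun p => f p.1 * g p.2].

Lemma tensorE (A B : finType) (f : fsp K A) (g : fsp K B) p : tensor f g p = f p.1 * g p.2.
Proof. exact: ffunE. Qed.

Lemma tens_vline (A B : finType) (x : fsp K A) (y : fsp K B) :
  tens <[x]>%VS <[y]>%VS = <[tensor x y]>%VS.
Proof.
rewrite /tens; have [c c0 ->] := vbasis_vline x; have [d d0 ->] := vbasis_vline y.
have [-> | x0] := eqVneq x 0.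
  suff -> : tensor (0 : fsp K A) y = 0 by rewrite /= span_nil vline0.
  by apply/ffunP => p; rewrite !ffunE mul0r.
have [-> | y0] := eqVneq y 0.
  suff -> : tensor x (0 : fsp K B) = 0 by rewrite /= span_nil vline0.
  by apply/ffunP => p; rewrite !ffunE mulr0.
rewrite /= span_seq1 -[RHS](vline_scale _ (mulf_neq0 c0 d0)).
by congr <[_]>%VS; apply/ffunP => p; rewrite !ffunE mulrACA.
Qed.

Lemma bigtens_vline (I Y : finType) (L : I -> {vspace fsp K Y}) (x : I -> fsp K Y) :
  (I -> 0 < #|Y|)%N -> (forall i, L i = <[x i]>%VS) ->
  bigtens L = <[[ffun t : {ffun I -> Y} => \prod_i x i (t i)]]>%VS.
Proof.
move=> Y0 Lx; set X := [ffun t => _].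
have /fin_all_exists2 [k k0 ek] i : exists2 c : K, c != 0 &
    forall n, ((vbasis (L i))`_n : fsp K Y) = if n == 0%N then c *: x i else 0.
  rewrite Lx; have [c c0 vb] := vbasis_vline (x i); exists c => // n; rewrite vb.
  by case: eqP => [-> | _]; case: n => [|[]]; rewrite ?scaler0.
have basis_prodE (c : {ffun I -> 'I_#|Y| }) :
    [ffun t : {ffun I -> Y} => \prod_i ((vbasis (L i))`_(c i) : fsp K Y) (t i)] =
    if [forall i, c i == 0 :> nat] then (\prod_i k i) *: X else 0.
  apply/ffunP => t; rewrite ffunE; case: ifP => [/forallP c0 | /negbT/forallPn [i ci]].
    rewrite !ffunE -[_ *: _]/(_ * _) -big_split.
    by apply: eq_bigr => i _; rewrite ek c0 ffunE.
  by rewrite (bigD1 i) //= ek (negPf ci) ffunE mul0r ffunE.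
pose c0 : {ffun I -> 'I_#|Y| } := [ffun i => Ordinal (Y0 i)].
have kX0 : \prod_i k i != 0 by apply/prodf_neq0 => i _.
apply/eqP; rewrite eqEsubv; apply/andP; split.
  apply/span_subvP => y /imageP [c _ ->]; rewrite basis_prodE.
  by case: ifP => _; rewrite ?mem0v ?memvZ ?memv_line.
have -> : X = (\prod_i k i)^-1 *:
    [ffun t : {ffun I -> Y} => \prod_i ((vbasis (L i))`_(c0 i) : fsp K Y) (t i)].
  have c00 : [forall i, c0 i == 0 :> nat] by apply/forallP => i; rewrite ffunE.
  by rewrite basis_prodE c00 scalerA mulVf ?scale1r.
by rewrite -memvE memvZ // memv_span //; apply/imageP; exists c0.
Qed.

End Tensor.

Section PointScale.
Variables (K : fieldType) (A B : finType) (t0 : A) (b : fsp K B).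

Definition point_scale (x : fsp K A) : fsp K B := x t0 *: b.

Lemma point_scale_is_linear : linear point_scale.
Proof. by move=> k x y; rewrite /point_scale !ffunE scalerDl scalerA. Qed.

HB.instance Definition _ :=
  GRing.isLinear.Build K (fsp K A) (fsp K B) _ point_scale point_scale_is_linear.

End PointScale.

Section HalfEdges.
Variable G : graph.
Local Notation E := (gE G).
Local Notation H := (gH G).

Definition halves_spec (e : E) (p : H * H) : bool :=
  (p.1 != p.2) && [forall h, (gedge h == e) == ((h == p.1) || (h == p.2))].

Lemma halves_exist e : exists p, halves_spec e p.
Proof.
have /cards2P [x [y [xy hxy]]] : #|[set h | gedge h == e]| == 2 by rewrite gedgeP.
by exists (x, y); rewrite /halves_spec xy; apply/forallP => h; rewrite -in_set2 -hxy inE.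
Qed.

(* An arbitrary orientation of every edge. *)
Definition h1 e := (xchoose (halves_exist e)).1.
Definition h2 e := (xchoose (halves_exist e)).2.

Lemma halvesP e : halves_spec e (h1 e, h2 e).
Proof. exact: xchooseP (halves_exist e). Qed.

Lemma h1_neq_h2 e : h1 e != h2 e.
Proof. by case/andP: (halvesP e). Qed.

Lemma gedge_eqE e h : (gedge h == e) = (h == h1 e) || (h == h2 e).
Proof. by case/andP: (halvesP e) => _ /forallP/(_ h)/eqP. Qed.

Lemma gedge_h1 e : gedge (h1 e) = e.
Proof. by apply/eqP; rewrite gedge_eqE eqxx. Qed.

Lemma gedge_h2 e : gedge (h2 e) = e.
Proof. by apply/eqP; rewrite gedge_eqE eqxx orbT. Qed.

Lemma h1_inj : injective h1.
Proof. by move=> a b /(congr1 (@gedge G)); rewrite !gedge_h1. Qed.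

Lemma h2_inj : injective h2.
Proof. by move=> a b /(congr1 (@gedge G)); rewrite !gedge_h2. Qed.

Lemma h1_eq_h2 a b : (h1 a == h2 b) = false.
Proof.
apply/negbTE/eqP => ab; have eab : a = b by rewrite -(gedge_h1 a) ab gedge_h2.
by move: (h1_neq_h2 b); rewrite -{1}eab ab eqxx.
Qed.

Lemma sum_halves (V : nmodType) (F : H -> V) e :
  \sum_(h | gedge h == e) F h = F (h1 e) + F (h2 e).
Proof.
rewrite (bigD1 (h1 e)) ?gedge_h1 //= (bigD1 (h2 e)) /=; last first.
  by rewrite gedge_h2 eqxx eq_sym h1_neq_h2.
rewrite big1 ?addr0 // => h /andP[/andP[]]; rewrite gedge_eqE.
by case/orP => ->.
Qed.

Lemma aut_halves sV sE sH : is_aut sV sE sH -> forall e,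
  (sH (h1 e) = h1 (sE e) /\ sH (h2 e) = h2 (sE e)) \/
  (sH (h1 e) = h2 (sE e) /\ sH (h2 e) = h1 (sE e)).
Proof.
move=> [_ hE] e.
have img h : gedge h = e -> (sH h == h1 (sE e)) || (sH h == h2 (sE e)).
  by move=> he; rewrite -gedge_eqE hE he.
have n12 : sH (h1 e) != sH (h2 e) by rewrite (inj_eq perm_inj) h1_neq_h2.
case/orP: (img _ (gedge_h1 e)) => /eqP a1; case/orP: (img _ (gedge_h2 e)) => /eqP a2;
  rewrite a1 a2 ?eqxx in n12 *; by [left | right].
Qed.

End HalfEdges.

Section Chains.
Variables (K : fieldType) (G : graph).
Local Notation V := (gV G).
Local Notation E := (gE G).
Local Notation H := (gH G).

Lemma antisym_is_linear : linear (@antisym K G).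
Proof.
move=> a x y; apply/ffunP => h; rewrite !ffunE scaler_sumr -big_split.
by apply: eq_bigr => h' _; rewrite !ffunE.
Qed.

HB.instance Definition _ :=
  GRing.isLinear.Build K (fsp K H) (fsp K H) _ (@antisym K G) antisym_is_linear.

Lemma bd_is_linear : linear (@bd K G).
Proof.
move=> a x y; apply/ffunP => v; rewrite !ffunE scaler_sumr -big_split.
by apply: eq_bigr => h _; rewrite !ffunE.
Qed.

HB.instance Definition _ :=
  GRing.isLinear.Build K (fsp K H) (fsp K V) _ (@bd K G) bd_is_linear.

Definition C1 : {vspace fsp K H} := lker (linfun (@antisym K G)).

Lemma memC1 x : (x \in C1) = (antisym x == 0).
Proof. by rewrite memv_ker lfunE. Qed.

Lemma C1_halves x e : x \in C1 -> x (h1 e) + x (h2 e) = 0.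
Proof. by rewrite memC1 => /eqP/ffunP/(_ (h1 e)); rewrite !ffunE gedge_h1 sum_halves. Qed.

Definition cvec e : fsp K H := dvec K (h1 e) - dvec K (h2 e).

Lemma cvec_h1 e e' : cvec e (h1 e') = (e' == e)%:R.
Proof. by rewrite !ffunE (inj_eq (@h1_inj G)) h1_eq_h2 subr0. Qed.

Lemma cvec_h2 e e' : cvec e (h2 e') = - (e' == e)%:R.
Proof. by rewrite !ffunE eq_sym h1_eq_h2 (inj_eq (@h2_inj G)) sub0r. Qed.

Lemma cvec_C1 e : cvec e \in C1.
Proof.
rewrite memC1; apply/eqP/ffunP => h; rewrite !ffunE.
under eq_bigr do rewrite !ffunE.
by rewrite sumrB !sum_natr_eq gedge_h1 gedge_h2 subrr.
Qed.

Lemma C1_sum_cvec x : x \in C1 -> x = \sum_e x (h1 e) *: cvec e.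
Proof.
move=> xC1; apply/ffunP => h; rewrite sum_ffunE (bigD1 (gedge h)) //=.
rewrite big1 ?addr0 => [|e]; last first.
  rewrite eq_sym gedge_eqE negb_or => /andP[/negPf h1h /negPf h2h].
  by rewrite !ffunE h1h h2h subrr scaler0.
have : (h == h1 (gedge h)) || (h == h2 (gedge h)) by rewrite -gedge_eqE.
case/orP => /eqP {1 4}->.
  by rewrite ffunE cvec_h1 eqxx -[_ *: _]/(_ * _) mulr1.
rewrite ffunE cvec_h2 eqxx -[_ *: _]/(_ * _) mulrN1.
by apply/eqP; rewrite -addr_eq0 addrC C1_halves.
Qed.

Definition chain_basis : #|E|.-tuple (fsp K H) := [tuple cvec (enum_val i) | i < #|E|].

Lemma nth_chain_basis (i : 'I_#|E|) : chain_basis`_i = cvec (enum_val i).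
Proof. exact: nth_mktuple. Qed.

Lemma chain_basisP : basis_of C1 chain_basis.
Proof.
apply/andP; split; last first.
  apply: (free_dual_points (z := fun i => h1 (enum_val i))) => i j.
  by rewrite nth_chain_basis cvec_h1 (inj_eq enum_val_inj).
rewrite eqEsubv; apply/andP; split.
  by apply/span_subvP => _ /tnthP [i ->]; rewrite tnth_mktuple cvec_C1.
apply/subvP => x /C1_sum_cvec ->; rewrite big_enum_val_ord; apply: memv_suml => i _.
by rewrite memvZ // memv_span // -nth_chain_basis mem_nth ?size_tuple.
Qed.

End Chains.

Section Connected.
Variables (K : fieldType) (G : graph).
Local Notation V := (gV G).

Definition vsum (x : fsp K V) : K^o := \sum_v x v.

Lemma vsum_is_linear : linear vsum.
Proof.
by move=> a x y; rewrite /vsum scaler_sumr -big_split; apply: eq_bigr => v _; rewrite !ffunE.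
Qed.

HB.instance Definition _ := GRing.isLinear.Build K (fsp K V) K^o _ vsum vsum_is_linear.

Lemma vsum_pull (s : {perm V}) x : vsum (pull s x) = vsum x.
Proof.
by rewrite /vsum [RHS](reindex_inj (@perm_inj _ s)); apply: eq_bigr => v _; rewrite ffunE.
Qed.

Lemma vsum_bd x : x \in C1 K G -> vsum (bd x) = 0.
Proof.
move=> xC1; rewrite /vsum; under eq_bigr do rewrite ffunE.
have -> : \sum_v \sum_(h | gend h == v) x h = \sum_h x h.
  by rewrite [RHS](partition_big (@gend G) predT).
rewrite (partition_big (@gedge G) predT) //=.
by apply: big1 => e _; rewrite sum_halves C1_halves.
Qed.

Lemma adj_dvec_sub_img_bd u w :
  adj u w -> dvec K u - dvec K w \in (linfun (@bd K G) @: C1 K G)%VS.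
Proof.
case/existsP => h /existsP [h' /and3P [/eqP hh' /eqP hu /eqP hw]].
have cC1 : dvec K h - dvec K h' \in C1 K G.
  rewrite memC1; apply/eqP/ffunP => k; rewrite !ffunE.
  by under eq_bigr do rewrite !ffunE; rewrite sumrB !sum_natr_eq hh' subrr.
suff -> : dvec K u - dvec K w = linfun (@bd K G) (dvec K h - dvec K h') by exact: memv_img.
apply/ffunP => v; rewrite lfunE /= !ffunE.
by under [RHS]eq_bigr do rewrite !ffunE; rewrite sumrB !sum_natr_eq hu hw !(eq_sym v).
Qed.

Lemma connect_dvec_sub_img_bd u w :
  connect (@adj G) u w -> dvec K u - dvec K w \in (linfun (@bd K G) @: C1 K G)%VS.
Proof.
case/connectP => p; elim: p u => [|a p IH] u /=; first by move=> _ ->; rewrite subrr mem0v.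
case/andP => ua pa wl.
by rewrite -(subrKA (dvec K a)) memvD ?(IH a) // adj_dvec_sub_img_bd.
Qed.

Lemma img_bd_C1 : connected G -> (linfun (@bd K G) @: C1 K G)%VS = lker (linfun vsum).
Proof.
move=> [/card_gt0P [v0 _] conn]; apply/eqP; rewrite eqEsubv; apply/andP; split.
  by apply/subvP => _ /memv_imgP [x xC1 ->]; rewrite memv_ker !lfunE /= vsum_bd.
apply/subvP => y; rewrite memv_ker lfunE /= => /eqP y0.
have -> : y = \sum_v y v *: (dvec K v - dvec K v0).
  under eq_bigr do rewrite scalerBr.
  by rewrite sumrB -scaler_suml -/(vsum y) y0 scale0r subr0 -fsp_sum_dvec.
by apply: memv_suml => v _; rewrite memvZ // connect_dvec_sub_img_bd.
Qed.

End Connected.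

Section HalfEdgeLines.
Variables (K : fieldType) (G : graph).
Local Notation H := (gH G).

Definition halves_tuple e : 2.-tuple (fsp K H) := [tuple dvec K (h1 e); dvec K (h2 e)].

Definition omega e : fsp K (2.-tuple H) := wedge (halves_tuple e).

Lemma omegaE e (a : 2.-tuple H) : omega e a =
  (tnth a 0 == h1 e)%:R * (tnth a 1 == h2 e)%:R - (tnth a 1 == h1 e)%:R * (tnth a 0 == h2 e)%:R.
Proof. by rewrite ffunE det_mx2 !mxE !ffunE. Qed.

Lemma omega_halves e : omega e [tuple h1 e; h2 e] = 1.
Proof.
by rewrite omegaE !(tnth_nth (h1 e)) /= !eqxx h1_eq_h2 eq_sym h1_eq_h2 mulr0 subr0 mulr1.
Qed.

Lemma RHe_basis e : basis_of (RHe K e) (halves_tuple e).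
Proof.
apply/andP; split.
  apply/eqP/eq_span => x; rewrite !inE; apply/idP/mapP => [/orP[]/eqP -> | [h]].
  - by exists (h1 e); rewrite ?mem_enum ?inE ?gedge_h1.
  - by exists (h2 e); rewrite ?mem_enum ?inE ?gedge_h2.
  by rewrite mem_enum inE gedge_eqE => /orP[]/eqP -> ->; rewrite eqxx ?orbT.
apply: (free_dual_points (z := fun i => tnth [tuple h1 e; h2 e] i)) => i j.
by case: i j => [[|[|//]] ?] [[|[|//]] ?]; rewrite !(tnth_nth (h1 e)) /= ffunE
  ?eqxx ?h1_eq_h2 // eq_sym h1_eq_h2.
Qed.

Lemma detl_RHe e : detl 2 (RHe K e) = <[omega e]>%VS.
Proof. exact: detl_basis (RHe_basis e). Qed.

End HalfEdgeLines.

Section Automorphism.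
Variables (K : fieldType) (G : graph).
Variables (sV : {perm gV G}) (sE : {perm gE G}) (sH : {perm gH G}).
Hypothesis hA : is_aut sV sE sH.

Lemma antisym_pull x : antisym (pull sH x) = pull sH (@antisym K G x).
Proof.
apply/ffunP => h; rewrite !ffunE [RHS](reindex_inj (@perm_inj _ sH)) /=.
by apply: eq_big => [h'|h' _]; rewrite ?ffunE // !hA.2 (inj_eq perm_inj).
Qed.

Lemma bd_pull x : bd (pull sH x) = pull sV (@bd K G x).
Proof.
apply/ffunP => v; rewrite !ffunE [RHS](reindex_inj (@perm_inj _ sH)) /=.
by apply: eq_big => [h'|h' _]; rewrite ?ffunE // hA.1 (inj_eq perm_inj).
Qed.

Lemma C1_pull : {in C1 K G, forall x, pull sH x \in C1 K G}.
Proof. by move=> x; rewrite !memC1 antisym_pull => /eqP ->; rewrite linear0. Qed.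

Lemma H1_pull : {in H1 K G, forall x, pull sH x \in H1 K G}.
Proof.
move=> x; rewrite !memv_cap => /andP[/C1_pull -> ]; rewrite !memv_ker !lfunE /= bd_pull.
by move/eqP ->; rewrite linear0.
Qed.

Definition aut_sign e : K := if sH (h1 e) == h1 (sE e) then 1 else -1.

Lemma cvec_pull e : pull sH (cvec K (sE e)) = aut_sign e *: cvec K e.
Proof.
rewrite /aut_sign; have [[f1 f2]|[f1 f2]] := aut_halves hA e.
  by rewrite f1 eqxx scale1r; apply/ffunP => h; rewrite !ffunE -f1 -f2 !(inj_eq perm_inj).
rewrite f1 (eq_sym (h2 _)) h1_eq_h2 scaleN1r opprB; apply/ffunP => h.
by rewrite !ffunE -f1 -f2 !(inj_eq perm_inj).
Qed.

Lemma omega_pull e (a : 2.-tuple (gH G)) :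
  omega K (sE e) (map_tuple sH a) = aut_sign e * omega K e a.
Proof.
rewrite !omegaE !tnth_map /aut_sign; have [[f1 f2]|[f1 f2]] := aut_halves hA e.
  by rewrite f1 eqxx mul1r -f1 -f2 !(inj_eq perm_inj).
rewrite f1 (eq_sym (h2 _)) h1_eq_h2 -f1 -f2 !(inj_eq perm_inj) mulN1r opprB.
by rewrite [X in _ - X]mulrC [X in X - _]mulrC.
Qed.

Lemma ldet_pull_C1 :
  ldet (linfun (pull sH)) (C1 K G) = (\prod_e aut_sign e) * (-1) ^+ enum_perm sE^-1.
Proof.
rewrite (ldet_signed_perm (c := fun i => aut_sign ((sE^-1)%g (enum_val i)))
   (p := enum_perm sE^-1) (chain_basisP K G)) => [|i].
  rewrite -(big_enum_val_ord _ (fun e => aut_sign ((sE^-1)%g e))); congr (_ * _).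
  exact: esym (reindex_inj (@perm_inj _ sE^-1)).
by rewrite lfunE /= !nth_chain_basis enum_permE -{1}[enum_val i](permKV sE) cvec_pull.
Qed.

Lemma ldet_pull_H1 : connected G ->
  ldet (linfun (pull sH)) (H1 K G) * ldet (linfun (pull sE)) fullv =
  ldet (linfun (pull sV)) fullv * \prod_e aut_sign e.
Proof.
move=> hc.
have split_C1 : ldet (linfun (pull sH)) (C1 K G) =
    ldet (linfun (pull sH)) (H1 K G) * ldet (linfun (pull sV)) (lker (linfun (@vsum K G))).
  rewrite -img_bd_C1 //; apply: ldet_ker_img => x xC1; rewrite !lfunE /= ?bd_pull //.
  exact: C1_pull.
have split_V : ldet (linfun (pull sV)) fullv = ldet (linfun (pull sV)) (lker (linfun (@vsum K G))).
  rewrite (ldet_ker_img (P := linfun (@vsum K G)) (g := \1)) ?capfv ?ldet_id ?mulr1 // => x _.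
    exact: memvf.
  by rewrite !lfunE /= vsum_pull.
move: split_C1; rewrite -split_V ldet_pull_C1 !ldet_pull.
set P := \prod_e _; set sgV := (-1) ^+ enum_perm sV^-1; set sgE := (-1) ^+ enum_perm sE^-1.
move=> e1.
have -> : ldet (linfun (pull sH)) (H1 K G) = P * sgE * sgV.
  by rewrite e1 -mulrA -expr2 sqrr_sign mulr1.
by rewrite -mulrA [sgV * _]mulrC mulrA -[P * _ * _]mulrA -expr2 sqrr_sign mulr1 mulrC.
Qed.

End Automorphism.

Section Generators.
Variables (K : fieldType) (G : graph).
Local Notation V := (gV G).
Local Notation E := (gE G).
Local Notation H := (gH G).

Definition omega_prod : fsp K {ffun E -> 2.-tuple H} :=
  [ffun t : {ffun E -> 2.-tuple H} => \prod_e omega K e (t e)].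

Definition lhs_gen : fsp K (LT G) := tensor (wedge (std K V)) omega_prod.

Definition rhs_gen : fsp K (RT K G) :=
  tensor (wedge [tuple (vbasis (H1 K G))`_i | i < \dim (H1 K G)]) (wedge (std K E)).

Lemma lhsL_vline : lhsL K G = <[lhs_gen]>%VS.
Proof.
rewrite /lhsL (detl_basis (std_basis K V)) (bigtens_vline (x := @omega K G)) ?tens_vline //.
  by move=> e; apply/card_gt0P; exists [tuple h1 e; h1 e].
exact: detl_RHe.
Qed.

Lemma rhsL_vline : rhsL K G = <[rhs_gen]>%VS.
Proof. by rewrite /rhsL (detl_basis (std_basis K E)) tens_vline. Qed.

Definition lhs_point : LT G := ([tuple enum_val j | j < #|V|], [ffun e => [tuple h1 e; h2 e]]).

Lemma lhs_gen_point : lhs_gen lhs_point = 1.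
Proof.
rewrite ffunE /= wedge_std_enum mul1r ffunE.
by apply: big1 => e _; rewrite ffunE omega_halves.
Qed.

Variables (sV : {perm V}) (sE : {perm E}) (sH : {perm H}).

Lemma pullL_is_linear : linear (@pullL K G sV sE sH).
Proof. by move=> k x y; apply/ffunP => t; rewrite !ffunE. Qed.

HB.instance Definition _ :=
  GRing.isLinear.Build K (fsp K (LT G)) (fsp K (LT G)) _ (pullL sV sE sH) pullL_is_linear.

Lemma pullR_is_linear : linear (@pullR K G sE sH).
Proof. by move=> k x y; apply/ffunP => t; rewrite !ffunE. Qed.

HB.instance Definition _ :=
  GRing.isLinear.Build K (fsp K (RT K G)) (fsp K (RT K G)) _ (pullR sE sH) pullR_is_linear.

Hypothesis hA : is_aut sV sE sH.

Lemma pullL_lhs_gen : pullL sV sE sH lhs_gen =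
  (ldet (linfun (pull sV)) fullv * \prod_e aut_sign K sE sH e) *: lhs_gen.
Proof.
apply/ffunP => t; rewrite ffunE [RHS]ffunE !tensorE /=.
rewrite (wedge_pull_basis _ (std_basis K V)) => [|x _]; last exact: memvf.
rewrite -[_ *: _]/(_ * _) mulrACA; congr (_ * _).
rewrite !ffunE (reindex_inj (@perm_inj _ sE)) /= -big_split.
by apply: eq_bigr => e _; rewrite ffunE permK (omega_pull K hA).
Qed.

Lemma pullR_rhs_gen : pullR sE sH rhs_gen =
  (ldet (linfun (pull sH)) (H1 K G) * ldet (linfun (pull sE)) fullv) *: rhs_gen.
Proof.
apply/ffunP => t; rewrite ffunE [RHS]ffunE !tensorE /=.
rewrite (wedge_pull_basis _ (std_basis K E)) => [|x _]; last exact: memvf.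
rewrite (wedge_pull_basis _ (basis_of_vbasis_tuple (erefl _))); last exact: H1_pull hA.
by rewrite -[_ *: _]/(_ * _) mulrACA.
Qed.

End Generators.

Theorem proposition2p4 (R : realFieldType) (G : graph) :
  connected G ->
  exists Phi : 'Hom(fsp R (LT G), fsp R (RT R G)),
    (Phi @: lhsL R G)%VS = rhsL R G /\
    (forall sV sE sH, is_aut sV sE sH ->
       forall x, x \in lhsL R G -> Phi (pullL sV sE sH x) = pullR sE sH (Phi x)).
Proof.
move=> hc; pose Phi := linfun (point_scale (lhs_point G) (rhs_gen R G)).
have Phi_gen : Phi (lhs_gen R G) = rhs_gen R G.
  by rewrite lfunE /= /point_scale lhs_gen_point scale1r.
exists Phi; split; first by rewrite lhsL_vline rhsL_vline limg_line Phi_gen.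
move=> sV sE sH hA; rewrite lhsL_vline.
apply: (vline_commute (f := pullL sV sE sH) (g := pullR sE sH) Phi_gen (pullL_lhs_gen R hA)).
by move: (pullR_rhs_gen R hA); rewrite (ldet_pull_H1 R hA hc).
Qed.
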